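(* For every integer $n\ge0$, \[ \sum_{k=0}^{n}\sum_{p=0}^{n-k}\frac{\ln^p2}{p!}\operatorname{Li}_{n-k+2-p,\{1\}_k}\!\left(\tfrac12\right)=\frac{1-2^{n+1}}{(n+2)!}\ln^{n+2}2+\frac12\sum_{k=0}^{n}\zeta(n-k+2,\{1\}_k). \]
   Context: Multiple zeta values: $\zeta(s_1,\dots,s_l):=\sum_{n_1>\cdots>n_l>0}n_1^{-s_1}\cdots n_l^{-s_l}$ ($s_1\ge2$). Multiple polylogarithm: $\operatorname{Li}_{s_1,\dots,s_l}(z):=\sum_{n_1>n_2>\cdots>n_l>0}\frac{z^{n_1}}{n_1^{s_1}\cdots n_l^{s_l}}$. The notation $\{1\}_k$ denotes the string $1,1,\dots,1$ ($k$ times); for $k=0$ it is empty. *)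

From Stdlib Require Import Reals Lra Lia List ClassicalEpsilon.
Open Scope R_scope.

(* The limit of a real sequence (chosen by epsilon; equals the true limit
   whenever the sequence converges, since limits are unique). *)
Definition seq_lim (u : nat -> R) : R :=
  epsilon (inhabits 0%R) (fun l => Un_cv u l).

(* Truncated nested sum:
   H s M = sum_{M >= n_1 > n_2 > ... > n_l > 0} n_1^{-s_1} ... n_l^{-s_l}. *)
Fixpoint H (s : list nat) (M : nat) : R :=
  match s with
  | nil => 1
  | s1 :: r =>
      (fix loop (m : nat) : R :=
         match m with
         | O => 0
         | S m' => loop m' + / (INR (S m') ^ s1) * H r m'
         end) M
  end.

(* Truncated multiple polylogarithm:
   sum_{N >= n_1 > ... > n_l > 0} z^{n_1} / (n_1^{s_1} ... n_l^{s_l}). *)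
Definition Li_trunc (s : list nat) (z : R) (N : nat) : R :=
  match s with
  | nil => 1
  | s1 :: r =>
      (fix loop (m : nat) : R :=
         match m with
         | O => 0
         | S m' => loop m' + z ^ (S m') / (INR (S m') ^ s1) * H r m'
         end) N
  end.

Definition Li (s : list nat) (z : R) : R := seq_lim (Li_trunc s z).

Definition zeta (s : list nat) : R := seq_lim (H s).

Definition ones (k : nat) : list nat := repeat 1%nat k.

(* Write P_j(z) = (-ln z)^j / j! and Q_j(z) = P_j(1-z).  The proof studies
     Phi_n(z) = L_n(z) + L_n(1-z) + R_n(z),
     L_n(z)   = sum_(k<=n) sum_(p<=n-k) P_p(z) Li_{n-k+2-p,{1}_k}(z),
     R_n(z)   = sum_(i<=n) P_(i+1)(z) Q_(n+1-i)(z)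
   on (0,1), whose left-hand side of the theorem is L_n(1/2).
   1. Li_{m,{1}_k} is a power series with coefficients O(N); termwise
      differentiation gives d/dz Li_{m+1,{1}_k} = Li_{m,{1}_k}(z)/z, and an
      Abel summation yields the closed form Li_{{1}_k}(z) = Q_k(z).
   2. Hence the inner sums of L_n telescope under differentiation, and the
      derivatives of L_n(z), L_n(1-z) and R_n(z) cancel: Phi_n is constant.
   3. As z -> 1, Abel's theorem gives Li_{m,{1}_k}(z) -> zeta(m,{1}_k) for
      m >= 2 (convergence of zeta is proved by comparison with a telescoping
      series), while the remaining terms are O((1-z) (-ln(1-z))^j) -> 0.
   4. Evaluating Phi_n(1/2) = 2 L_n(1/2) + R_n(1/2), where R_n(1/2) is a
      truncated binomial sum, gives the identity. *)

From Stdlib Require Import Reals List Arith Factorial.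
From Stdlib Require Import Lra Lia ClassicalEpsilon.
Open Scope R_scope.

Lemma seq_lim_eq (u : nat -> R) (l : R) : Un_cv u l -> seq_lim u = l.
Proof.
  intros Hu. unfold seq_lim.
  apply (UL_sequence u); [|exact Hu].
  exact (epsilon_spec (inhabits 0) (fun l => Un_cv u l) (ex_intro _ l Hu)).
Qed.

Lemma const_cv (c : R) : Un_cv (fun _ => c) c.
Proof.
  intros e He; exists 0%nat; intros n _.
  unfold Rdist; rewrite Rminus_diag, Rabs_R0; exact He.
Qed.

Lemma cv_shift_S (u : nat -> R) (l : R) :
  Un_cv (fun n => u (S n)) l <-> Un_cv u l.
Proof.
  split; intros Hu.
  - apply (CV_shift u 1); apply (Un_cv_ext (fun n => u (S n))); [|exact Hu].
    intro n; f_equal; lia.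
  - apply (Un_cv_ext (fun n => u (n + 1)%nat)); [|exact (CV_shift' u 1 l Hu)].
    intro n; f_equal; lia.
Qed.

Lemma series_terms_cv0 (a : nat -> R) (l : R) : Un_cv (sum_f_R0 a) l -> Un_cv a 0.
Proof.
  intros Hl. apply cv_shift_S.
  apply (Un_cv_ext (fun n => sum_f_R0 a (S n) - sum_f_R0 a n)).
  - intro n. rewrite tech5. ring.
  - replace 0 with (l - l) by ring.
    apply CV_minus; [apply (cv_shift_S (sum_f_R0 a))|]; exact Hl.
Qed.

Lemma nonneg_series_cv (a : nat -> R) (B : R) :
  (forall n, 0 <= a n) -> (forall n, sum_f_R0 a n <= B) ->
  exists l, Un_cv (sum_f_R0 a) l.
Proof.
  intros Ha HB.
  destruct (growing_cv (sum_f_R0 a)) as [l Hl].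
  - intro n. rewrite tech5. specialize (Ha (S n)). lra.
  - exists B. intros x [i ->]. apply HB.
  - exists l; exact Hl.
Qed.

Lemma dominated_series_cv (a b : nat -> R) :
  (forall n, Rabs (a n) <= b n) -> (exists l, Un_cv (sum_f_R0 b) l) ->
  exists l, Un_cv (sum_f_R0 a) l.
Proof.
  intros Hab Hb.
  apply constructive_indefinite_description in Hb.
  assert (Habs := Rseries_CV_comp (fun n => Rabs (a n)) b
     (fun n => conj (Rabs_pos _) (Hab n)) Hb).
  apply cv_cauchy_1, cauchy_abs, cv_cauchy_2 in Habs.
  destruct Habs as [l Hl]. exists l; exact Hl.
Qed.

Lemma derivable_pt_lim_sum (f : nat -> R -> R) (f' : nat -> R) (n : nat) (x : R) :
  (forall i, (i <= n)%nat -> derivable_pt_lim (f i) x (f' i)) ->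
  derivable_pt_lim (fun y => sum_f_R0 (fun i => f i y) n) x (sum_f_R0 f' n).
Proof.
  induction n; intros Hd.
  - apply Hd. lia.
  - apply (derivable_pt_lim_plus (fun y => sum_f_R0 (fun i => f i y) n) (f (S n))).
    + apply IHn. intros; apply Hd; lia.
    + apply Hd; lia.
Qed.

(** * Growth of the nested sums [H {1}_k] *)

Lemma INR_S_pos (N : nat) : 0 < INR (S N).
Proof. apply lt_0_INR; lia. Qed.

Lemma H_cons_S (m : nat) (r : list nat) (M : nat) :
  H (m :: r) (S M) = H (m :: r) M + / INR (S M) ^ m * H r M.
Proof. reflexivity. Qed.

Lemma H_cons_sum (m : nat) (r : list nat) (M : nat) :
  H (m :: r) (S M) = sum_f_R0 (fun N => / INR (S N) ^ m * H r N) M.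
Proof.
  induction M; [simpl; ring|]. rewrite tech5, <- IHM. reflexivity.
Qed.

Lemma H_ones_nonneg (k N : nat) : 0 <= H (ones k) N.
Proof.
  revert N; induction k; intros N; [simpl; lra|].
  induction N; [simpl; lra|].
  change (ones (S k)) with (1%nat :: ones k) in *. rewrite H_cons_S.
  assert (0 < / INR (S N) ^ 1) by (apply Rinv_0_lt_compat, pow_lt, INR_S_pos).
  specialize (IHk N). nra.
Qed.

(* [half_prod M] = prod_(j=1..M) (1 + 1/(2j)), a sequence growing like
   sqrt M; it dominates [H {1}_k] up to the factor [2^k] while
   [half_prod N / (N+1)] still decreases fast enough to sum [zeta]. *)
Fixpoint half_prod (M : nat) : R :=
  match M with O => 1 | S M' => half_prod M' * (1 + / (2 * INR (S M'))) end.

Lemma half_prod_S (M : nat) :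
  half_prod (S M) = half_prod M * (1 + / (2 * INR (S M))).
Proof. reflexivity. Qed.

Lemma half_prod_ge1 (M : nat) : 1 <= half_prod M.
Proof.
  induction M; [simpl; lra|]. rewrite half_prod_S.
  assert (Ht : 0 < / (2 * INR (S M))) by (apply Rinv_0_lt_compat; assert (H0 := INR_S_pos M); lra).
  assert (0 <= (half_prod M - 1) * / (2 * INR (S M))) by (apply Rmult_le_pos; lra).
  nra.
Qed.

Lemma half_prod_le (M : nat) : half_prod M <= INR (S M).
Proof.
  induction M; [simpl; lra|]. rewrite half_prod_S.
  assert (Hp := INR_S_pos M). assert (H1 := half_prod_ge1 M).
  rewrite (S_INR (S M)).
  assert (E : INR (S M) * (1 + / (2 * INR (S M))) = INR (S M) + 1/2) by (field; lra).
  assert (0 < 1 + / (2 * INR (S M))) by (assert (0 < / (2 * INR (S M))) by (apply Rinv_0_lt_compat; lra); lra).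
  apply Rle_trans with (INR (S M) * (1 + / (2 * INR (S M)))); [apply Rmult_le_compat_r; lra|lra].
Qed.

Lemma H_ones_le_half_prod (k N : nat) : H (ones k) N <= 2 ^ k * half_prod N.
Proof.
  revert N; induction k; intros N.
  - simpl. assert (H0 := half_prod_ge1 N). lra.
  - induction N; [simpl; assert (0 < 2 ^ k) by (apply pow_lt; lra); lra|].
    change (ones (S k)) with (1%nat :: ones k) in *. rewrite H_cons_S.
    specialize (IHk N). assert (Hp := INR_S_pos N).
    rewrite half_prod_S. simpl (2 ^ S k) in *. rewrite pow_1.
    assert (E : 2 * 2 ^ k * (half_prod N * (1 + / (2 * INR (S N)))) =
                2 * 2 ^ k * half_prod N + / INR (S N) * (2 ^ k * half_prod N)) by (field; lra).
    rewrite E. apply Rplus_le_compat; [exact IHN|].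
    apply Rmult_le_compat_l; [apply Rlt_le, Rinv_0_lt_compat|]; lra.
Qed.

Lemma H_ones_le_lin (k N : nat) : H (ones k) N <= 2 ^ k * INR (S N).
Proof.
  apply Rle_trans with (1 := H_ones_le_half_prod k N).
  apply Rmult_le_compat_l; [apply pow_le; lra|apply half_prod_le].
Qed.

Lemma cv_scal (c : R) (u : nat -> R) (l : R) :
  Un_cv u l -> Un_cv (fun n => c * u n) (c * l).
Proof. apply CV_mult, const_cv. Qed.

Lemma lin_geom_sum (r : R) (n : nat) : r <> 1 ->
  sum_f_R0 (fun N => INR (S N) * r ^ N) n =
  (1 - INR (S (S n)) * r ^ (S n) + INR (S n) * r ^ (S (S n))) / (1 - r) ^ 2.
Proof.
  intros Hr. induction n.
  - simpl. field. lra.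
  - rewrite tech5, IHn, !S_INR. simpl pow. field. lra.
Qed.

Lemma lin_geom_cv (K r : R) : 0 <= r < 1 ->
  exists l, Un_cv (sum_f_R0 (fun N => K * (INR (S N) * r ^ N))) l.
Proof.
  intros Hr.
  destruct (nonneg_series_cv (fun N => INR (S N) * r ^ N) (/ (1 - r) ^ 2)) as [l Hl].
  - intro n. apply Rmult_le_pos; [apply pos_INR | apply pow_le; lra].
  - intro n. rewrite lin_geom_sum by lra. unfold Rdiv.
    rewrite Rmult_comm. rewrite <- (Rmult_1_r (/ (1 - r) ^ 2)) at 2.
    apply Rmult_le_compat_l; [apply Rlt_le, Rinv_0_lt_compat, pow_lt; lra|].
    assert (0 <= r ^ S n) by (apply pow_le; lra).
    assert (0 <= INR (S n)) by apply pos_INR.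
    assert (INR (S n) * r ^ S (S n) <= INR (S (S n)) * r ^ S n).
    { change (r ^ S (S n)) with (r * r ^ S n). rewrite (S_INR (S n)).
      assert (0 <= (1 - r) * (INR (S n) * r ^ S n)) by (apply Rmult_le_pos; [lra|nra]).
      nra. }
    lra.
  - exists (K * l). apply (Un_cv_ext (fun n => K * sum_f_R0 (fun N => INR (S N) * r ^ N) n)).
    + intro n. rewrite scal_sum. apply sum_eq. intros; ring.
    + apply cv_scal, Hl.
Qed.

Definition pser (a : nat -> R) (y : R) (n : nat) : R :=
  sum_f_R0 (fun N => y ^ N * a N) n.
Definition pser1 (b : nat -> R) (y : R) (n : nat) : R :=
  sum_f_R0 (fun N => y ^ (S N) * b N) n.

Lemma pser1_eq (b : nat -> R) (y : R) (n : nat) : pser1 b y n = y * pser b y n.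
Proof. unfold pser1, pser. rewrite scal_sum. apply sum_eq. intros; simpl; ring. Qed.

Section LinearlyBoundedSeries.

Variables (a : nat -> R) (K : R).
Hypothesis a_bound : forall N, Rabs (a N) <= K * INR (S N).

Lemma pser_term_bound (y r : R) (N : nat) : Rabs y <= r ->
  Rabs (y ^ N * a N) <= K * (INR (S N) * r ^ N).
Proof.
  intros Hy. rewrite Rabs_mult, <- RPow_abs.
  assert (0 <= Rabs y ^ N) by (apply pow_le, Rabs_pos).
  assert (Rabs y ^ N <= r ^ N) by (apply pow_incr; split; [apply Rabs_pos|exact Hy]).
  assert (HK := a_bound N).
  assert (0 <= K * INR (S N)) by (eapply Rle_trans; [apply Rabs_pos|exact HK]).
  apply Rle_trans with (r ^ N * (K * INR (S N))); [|right; ring].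
  apply Rmult_le_compat; auto. apply Rabs_pos.
Qed.

Lemma pser_cv (y : R) : Rabs y < 1 -> exists l, Un_cv (pser a y) l.
Proof.
  intros Hy. apply (dominated_series_cv _ (fun N => K * (INR (S N) * Rabs y ^ N))).
  - intro N. apply pser_term_bound, Rle_refl.
  - apply lin_geom_cv. split; [apply Rabs_pos|exact Hy].
Qed.

Lemma pser_CVU (r : posreal) (g : R -> R) : r < 1 ->
  (forall y, Rabs y < r -> Un_cv (pser a y) (g y)) ->
  CVU (fun n y => pser a y n) g 0 r.
Proof.
  intros Hr1 Hg eps Heps.
  assert (Hr0 := cond_pos r).
  destruct (lin_geom_cv K r) as [L HL]; [lra|].
  destruct (HL eps Heps) as [N0 HN0].
  exists N0. intros n y Hn Hy.
  unfold Boule in Hy. rewrite Rminus_0_r in Hy.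
  apply Rle_lt_trans with (L - sum_f_R0 (fun N => K * (INR (S N) * r ^ N)) n).
  - apply (sum_maj1 (fun N y => y ^ N * a N)); [apply Hg, Hy|exact HL|].
    intro N. apply pser_term_bound. lra.
  - specialize (HN0 n Hn). unfold Rdist in HN0. rewrite Rabs_minus_sym in HN0.
    apply Rle_lt_trans with (2 := HN0), RRle_abs.
Qed.

Lemma pser_deriv (b : nat -> R) (g G : R -> R) (y : R) :
  (forall N, INR (S N) * b N = a N) ->
  (forall x, Rabs x < 1 -> Un_cv (pser1 b x) (g x)) ->
  (forall x, Rabs x < 1 -> Un_cv (pser a x) (G x)) ->
  Rabs y < 1 -> derivable_pt_lim g y (G y).
Proof.
  intros Hab Hg HG Hy.
  assert (Hr : 0 < (1 + Rabs y) / 2) by (assert (0 <= Rabs y) by apply Rabs_pos; lra).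
  set (r := mkposreal _ Hr).
  apply (CVU_derivable (fun n x => pser1 b x n) (fun n x => pser a x n) g G 0 r).
  - apply pser_CVU; [simpl; lra|]. intros; apply HG; simpl in *; lra.
  - intros x Hx. unfold Boule in Hx; rewrite Rminus_0_r in Hx. apply Hg. simpl in Hx; lra.
  - intros n x _. apply derivable_pt_lim_sum. intros i _.
    rewrite <- Hab.
    replace (x ^ i * (INR (S i) * b i)) with ((INR (S i) * x ^ pred (S i)) * b i) by (simpl; ring).
    apply (derivable_pt_lim_scal_right (fun y => y ^ S i)), derivable_pt_lim_pow.
  - unfold Boule; rewrite Rminus_0_r; simpl; lra.
Qed.

End LinearlyBoundedSeries.

(** * The polylogarithms Li_{m,{1}_k} as power series *)

(* Li_{m,{1}_k}(y) = sum_N li_coef m k N * y^(N+1). *)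
Definition li_coef (m k N : nat) : R := / INR (S N) ^ m * H (ones k) N.

Lemma li_coef_nonneg (m k N : nat) : 0 <= li_coef m k N.
Proof.
  apply Rmult_le_pos; [|apply H_ones_nonneg].
  apply Rlt_le, Rinv_0_lt_compat, pow_lt, INR_S_pos.
Qed.

Lemma li_coef_bound (m k N : nat) : Rabs (li_coef m k N) <= 2 ^ k * INR (S N).
Proof.
  rewrite Rabs_right by (apply Rle_ge, li_coef_nonneg).
  apply Rle_trans with (2 := H_ones_le_lin k N). unfold li_coef.
  assert (Hp := INR_S_pos N).
  assert (Hm : 1 <= INR (S N) ^ m) by (apply pow_R1_Rle; apply (le_INR 1); lia).
  assert (Hi : / INR (S N) ^ m <= 1) by (rewrite <- Rinv_1; apply Rinv_le_contravar; lra).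
  assert (Hn := H_ones_nonneg k N).
  rewrite <- (Rmult_1_l (H (ones k) N)) at 2. apply Rmult_le_compat_r; lra.
Qed.

Lemma Li_trunc_cons_S (m : nat) (r : list nat) (z : R) (M : nat) :
  Li_trunc (m :: r) z (S M) = sum_f_R0 (fun N => z ^ (S N) / INR (S N) ^ m * H r N) M.
Proof.
  induction M; [simpl; ring|]. rewrite tech5, <- IHM. reflexivity.
Qed.

Lemma Li_trunc_pser1 (m k : nat) (x : R) (n : nat) :
  Li_trunc (m :: ones k) x (S n) = pser1 (li_coef m k) x n.
Proof.
  rewrite Li_trunc_cons_S. apply sum_eq. intros. unfold li_coef, Rdiv. ring.
Qed.

(* Li_quot m k y = Li_{m,{1}_k}(y) / y, as the sum of a power series. *)
Definition Li_quot (m k : nat) (y : R) : R := seq_lim (pser (li_coef m k) y).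

Lemma Li_quot_cv (m k : nat) (y : R) : Rabs y < 1 ->
  Un_cv (pser (li_coef m k) y) (Li_quot m k y).
Proof.
  intros Hy. destruct (pser_cv (li_coef m k) (2 ^ k) (li_coef_bound m k) y Hy) as [l Hl].
  unfold Li_quot. rewrite (seq_lim_eq _ _ Hl). exact Hl.
Qed.

Lemma Li_quot_mul (m k : nat) (y : R) : Rabs y < 1 ->
  Li (m :: ones k) y = y * Li_quot m k y.
Proof.
  intros Hy. apply seq_lim_eq, cv_shift_S.
  apply (Un_cv_ext (fun n => y * pser (li_coef m k) y n)).
  - intro n. rewrite Li_trunc_pser1, pser1_eq. reflexivity.
  - apply cv_scal, Li_quot_cv, Hy.
Qed.

Lemma Li_pser1_cv (m k : nat) (y : R) : Rabs y < 1 ->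
  Un_cv (pser1 (li_coef m k) y) (Li (m :: ones k) y).
Proof.
  intros Hy. rewrite Li_quot_mul by exact Hy.
  apply (Un_cv_ext (fun n => y * pser (li_coef m k) y n)).
  - intro n. symmetry. apply pser1_eq.
  - apply cv_scal, Li_quot_cv, Hy.
Qed.

Lemma Li_at_0 (m k : nat) : Li (m :: ones k) 0 = 0.
Proof. rewrite Li_quot_mul by (rewrite Rabs_R0; lra). ring. Qed.

Lemma Li_deriv (m k : nat) (y : R) : Rabs y < 1 ->
  derivable_pt_lim (Li (S m :: ones k)) y (Li_quot m k y).
Proof.
  apply (pser_deriv (li_coef m k) (2 ^ k) (li_coef_bound m k) (li_coef (S m) k)).
  - intro N. unfold li_coef.
    change (INR (S N) ^ S m) with (INR (S N) * INR (S N) ^ m).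
    assert (Hp := INR_S_pos N). assert (Hm : 0 < INR (S N) ^ m) by (apply pow_lt; lra).
    field. lra.
  - apply Li_pser1_cv.
  - apply Li_quot_cv.
Qed.

(** * The closed form Li_{{1}_k}(y) = (-ln(1-y))^k / k! *)

Definition P (j : nat) (z : R) : R := (- ln z) ^ j / INR (fact j).
Definition Q (j : nat) (z : R) : R := P j (1 - z).

Lemma P_0 (z : R) : P 0 z = 1.
Proof. unfold P; simpl; field. Qed.

Lemma P_S_at_1 (j : nat) : P (S j) 1 = 0.
Proof. unfold P. rewrite ln_1, Ropp_0, pow_i by lia. unfold Rdiv; ring. Qed.

Lemma mln_nonneg (z : R) : 0 < z <= 1 -> 0 <= - ln z.
Proof.
  intros Hz. destruct (Req_dec z 1) as [->|Hne]; [rewrite ln_1; lra|].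
  assert (ln z < ln 1) by (apply ln_increasing; lra). rewrite ln_1 in *; lra.
Qed.

Lemma P_nonneg (j : nat) (z : R) : 0 < z <= 1 -> 0 <= P j z.
Proof.
  intros Hz. unfold P. apply Rmult_le_pos.
  - apply pow_le, mln_nonneg, Hz.
  - apply Rlt_le, Rinv_0_lt_compat, lt_0_INR, lt_O_fact.
Qed.

Lemma P_deriv (j : nat) (z : R) : 0 < z -> derivable_pt_lim (P (S j)) z (- P j z / z).
Proof.
  intros Hz. unfold P.
  assert (Hf : INR (fact (S j)) = INR (S j) * INR (fact j))
    by (change (fact (S j)) with (S j * fact j)%nat; apply mult_INR).
  assert (Hfj : 0 < INR (fact j)) by (apply lt_0_INR, lt_O_fact).
  replace (- ((- ln z) ^ j / INR (fact j)) / z)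
     with ((INR (S j) * (- ln z) ^ pred (S j)) * (- / z) / INR (fact (S j))).
  2:{ rewrite Hf. simpl pred. assert (0 < INR (S j)) by apply INR_S_pos. field. lra. }
  apply derivable_pt_lim_div_scal.
  apply (derivable_pt_lim_comp (fun z => - ln z) (fun u => u ^ S j)).
  - apply (derivable_pt_lim_opp ln), derivable_pt_lim_ln, Hz.
  - apply derivable_pt_lim_pow.
Qed.

Lemma one_minus_deriv (x : R) : derivable_pt_lim (fun z => 1 - z) x (-1).
Proof.
  replace (-1) with (0 - 1) by ring.
  apply (derivable_pt_lim_minus (fct_cte 1) id);
    [apply derivable_pt_lim_const|apply derivable_pt_lim_id].
Qed.

Lemma Q_deriv (j : nat) (y : R) : y < 1 ->
  derivable_pt_lim (Q (S j)) y (Q j y / (1 - y)).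
Proof.
  intros Hy. unfold Q.
  replace (P j (1 - y) / (1 - y)) with ((- P j (1 - y) / (1 - y)) * (-1)) by (field; lra).
  apply (derivable_pt_lim_comp (fun y => 1 - y) (P (S j))).
  - apply one_minus_deriv.
  - apply P_deriv; lra.
Qed.

Lemma const_of_deriv0 (f : R -> R) (a b : R) :
  (forall x, a < x < b -> derivable_pt_lim f x 0) ->
  forall x y, a < x < b -> a < y < b -> f x = f y.
Proof.
  intros Hd.
  assert (Hlt : forall x y, a < x < b -> a < y < b -> x < y -> f x = f y).
  { intros x y Hx Hy Hxy.
    destruct (MVT_cor2 f (fun _ => 0) x y Hxy) as [c [Hc _]].
    - intros c Hc. apply Hd. lra.
    - lra. }
  intros x y Hx Hy. destruct (Rtotal_order x y) as [Hxy|[->|Hxy]]; auto.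
  symmetry; auto.
Qed.

Lemma abel_summation (e : nat -> R) (y : R) (n : nat) :
  (1 - y) * pser e y (S n) =
  e 0%nat + pser1 (fun N => e (S N) - e N) y n - y ^ (S (S n)) * e (S n).
Proof.
  unfold pser, pser1. induction n.
  - simpl. ring.
  - rewrite tech5, Rmult_plus_distr_l, IHn, tech5. simpl. ring.
Qed.

Lemma Li_trunc_ones_S (k : nat) (y : R) (n : nat) :
  Li_trunc (ones k) y (S n) =
  H (ones k) 0 + pser1 (fun N => H (ones k) (S N) - H (ones k) N) y n.
Proof.
  destruct k as [|k].
  - unfold pser1. rewrite sum_eq_R0 by (intros; simpl; ring). simpl. ring.
  - change (ones (S k)) with (1%nat :: ones k).
    rewrite Li_trunc_pser1. simpl (H _ 0). rewrite Rplus_0_l.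
    apply sum_eq. intros N _. rewrite H_cons_S. unfold li_coef. ring.
Qed.

Lemma Li_ones_quot (k : nat) (y : R) : Rabs y < 1 ->
  Li (ones k) y = (1 - y) * Li_quot 0 k y.
Proof.
  intros Hy. apply seq_lim_eq, cv_shift_S.
  set (e := li_coef 0 k).
  assert (He : forall N, e N = H (ones k) N) by (intro N; unfold e, li_coef; simpl; field).
  apply (Un_cv_ext (fun n => (1 - y) * pser e y (S n) + y * (y ^ S n * e (S n)))).
  - intro n. rewrite abel_summation, Li_trunc_ones_S, !He.
    unfold pser1. rewrite (sum_eq _ (fun N => y ^ S N * (H (ones k) (S N) - H (ones k) N)))
      by (intros; rewrite !He; reflexivity).
    simpl pow. ring.
  - rewrite <- (Rplus_0_r ((1 - y) * Li_quot 0 k y)).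
    apply CV_plus.
    + apply (cv_shift_S (fun n => (1 - y) * pser e y n)), cv_scal, Li_quot_cv, Hy.
    + rewrite <- (Rmult_0_r y). apply cv_scal.
      apply (cv_shift_S (fun n => y ^ n * e n)).
      apply (series_terms_cv0 _ _ (Li_quot_cv 0 k y Hy)).
Qed.

Theorem Li_ones_closed (k : nat) (y : R) : Rabs y < 1 -> Li (ones k) y = Q k y.
Proof.
  revert y. induction k as [|k IHk]; intros y Hy.
  - unfold Q. rewrite P_0. apply seq_lim_eq. exact (const_cv 1).
  - apply Rabs_def2 in Hy.
    enough (Hc : Li (ones (S k)) y - Q (S k) y = Li (ones (S k)) 0 - Q (S k) 0).
    { change (ones (S k)) with (1%nat :: ones k) in *.
      unfold Q in Hc. rewrite Li_at_0, Rminus_0_r, P_S_at_1 in Hc. unfold Q. lra. }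
    apply (const_of_deriv0 (fun y => Li (ones (S k)) y - Q (S k) y) (-1) 1); [|lra|lra].
    intros x Hx. assert (Hx' : Rabs x < 1) by (apply Rabs_def1; lra).
    replace 0 with (Li_quot 0 k x - Q k x / (1 - x)).
    + apply derivable_pt_lim_minus; [apply Li_deriv, Hx'|apply Q_deriv; lra].
    + rewrite <- IHk, Li_ones_quot by exact Hx'. field. lra.
Qed.

(** * Convergence of zeta(m,{1}_k) for m >= 2 *)

(* zeta_weight N = half_prod N / (N+1) decreases, and for m >= 2 the
   coefficients li_coef m k N are dominated by its successive differences. *)
Definition zeta_weight (N : nat) : R := half_prod N / INR (S N).

Lemma zeta_weight_nonneg (N : nat) : 0 <= zeta_weight N.
Proof.
  unfold zeta_weight. assert (H1 := half_prod_ge1 N). assert (H2 := INR_S_pos N).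
  apply Rmult_le_pos; [lra|]. apply Rlt_le, Rinv_0_lt_compat; lra.
Qed.

Lemma zeta_weight_diff (N : nat) :
  zeta_weight N - zeta_weight (S N) = half_prod N / (2 * INR (S N) * INR (S (S N))).
Proof.
  unfold zeta_weight. rewrite half_prod_S, (S_INR (S N)).
  assert (Hp := INR_S_pos N). field. lra.
Qed.

Lemma li_coef_le_weight_diff (m k N : nat) : (2 <= m)%nat ->
  li_coef m k N <= 2 ^ k * 4 * (zeta_weight N - zeta_weight (S N)).
Proof.
  intros Hm. rewrite zeta_weight_diff. unfold li_coef.
  set (x := INR (S N)).
  assert (Hx : 1 <= x) by (unfold x; apply (le_INR 1); lia).
  rewrite (S_INR (S N)). fold x.
  assert (Hb := H_ones_le_half_prod k N).
  assert (Hn := H_ones_nonneg k N).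
  assert (Hh := half_prod_ge1 N).
  assert (Hk : 0 < 2 ^ k) by (apply pow_lt; lra).
  assert (Hinv : / x ^ m <= / x ^ 2)
    by (apply Rinv_le_contravar; [apply pow_lt; lra|apply Rle_pow; [lra|exact Hm]]).
  apply Rle_trans with (/ x ^ 2 * (2 ^ k * half_prod N)).
  - apply Rmult_le_compat; auto. apply Rlt_le, Rinv_0_lt_compat, pow_lt; lra.
  - replace (2 ^ k * 4 * (half_prod N / (2 * x * (x + 1))))
      with (/ x ^ 2 * (2 ^ k * half_prod N) * (2 * x / (x + 1))) by (field; lra).
    rewrite <- (Rmult_1_r (/ x ^ 2 * (2 ^ k * half_prod N))) at 1.
    apply Rmult_le_compat_l.
    + apply Rmult_le_pos; [apply Rlt_le, Rinv_0_lt_compat, pow_lt; lra|nra].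
    + apply (Rmult_le_reg_r (x + 1)); [lra|]. unfold Rdiv.
      rewrite Rmult_assoc, Rinv_l by lra. lra.
Qed.

Lemma zeta_series_cv (m k : nat) : (2 <= m)%nat ->
  Un_cv (sum_f_R0 (li_coef m k)) (zeta (m :: ones k)).
Proof.
  intros Hm.
  destruct (nonneg_series_cv (li_coef m k) (2 ^ k * 4)) as [l Hl].
  - apply li_coef_nonneg.
  - intro n. apply Rle_trans with
      (sum_f_R0 (fun N => 2 ^ k * 4 * (zeta_weight N - zeta_weight (S N))) n).
    + apply sum_Rle. intros; apply li_coef_le_weight_diff, Hm.
    + assert (Htele : forall n, sum_f_R0 (fun N => 2 ^ k * 4 * (zeta_weight N - zeta_weight (S N))) n
                    = 2 ^ k * 4 * (zeta_weight 0 - zeta_weight (S n))).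
      { induction n0; simpl; [ring|]. rewrite IHn0. ring. }
      rewrite Htele. assert (zeta_weight 0 = 1) by (unfold zeta_weight; simpl; field).
      assert (Hk : 0 < 2 ^ k) by (apply pow_lt; lra).
      assert (Hw := zeta_weight_nonneg (S n)). nra.
  - replace (zeta (m :: ones k)) with l; [exact Hl|].
    symmetry. apply seq_lim_eq, cv_shift_S.
    apply (Un_cv_ext (sum_f_R0 (li_coef m k))); [|exact Hl].
    intro n. rewrite H_cons_sum. reflexivity.
Qed.

Lemma zeta_nonneg (m k : nat) : (2 <= m)%nat -> 0 <= zeta (m :: ones k).
Proof.
  intros Hm. apply Rle_trans with (sum_f_R0 (li_coef m k) 0).
  - apply li_coef_nonneg.
  - apply sum_incr; [apply zeta_series_cv, Hm|apply li_coef_nonneg].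
Qed.

Lemma Li_bounds (m k : nat) (y : R) : (2 <= m)%nat -> 0 <= y < 1 ->
  0 <= Li (m :: ones k) y <= y * zeta (m :: ones k).
Proof.
  intros Hm Hy.
  assert (HL := Li_pser1_cv m k y ltac:(rewrite Rabs_right; lra)).
  split.
  - refine (Rle_cv_lim _ (const_cv 0) HL).
    intro n. apply cond_pos_sum. intro N.
    apply Rmult_le_pos; [apply pow_le; lra|apply li_coef_nonneg].
  - refine (Rle_cv_lim _ HL (cv_scal y _ _ (zeta_series_cv m k Hm))).
    intro n. unfold pser1. rewrite scal_sum. apply sum_Rle. intros N _.
    assert (HN := li_coef_nonneg m k N).
    assert (y ^ N <= 1) by (rewrite <- (pow1 N); apply pow_incr; lra).
    simpl pow. rewrite Rmult_assoc, (Rmult_comm (li_coef m k N) y).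
    apply Rmult_le_compat_l; [lra|].
    rewrite <- (Rmult_1_l (li_coef m k N)) at 2. apply Rmult_le_compat_r; lra.
Qed.

Definition unit_interval (z : R) : Prop := 0 < z < 1.

Definition lim1 (f : R -> R) (l : R) : Prop := limit1_in f unit_interval l 1.

Lemma lim1_intro (f : R -> R) (l : R) :
  (forall eps, 0 < eps -> exists d, 0 < d /\
     forall z, 1 - d < z < 1 -> Rabs (f z - l) < eps) ->
  lim1 f l.
Proof.
  intros Hf eps Heps. destruct (Hf eps Heps) as [d [Hd Hz]].
  exists (Rmin d 1). split; [apply Rmin_glb_lt; lra|].
  intros x [Hx Hdx]. simpl in *. unfold Rdist, unit_interval in *.
  apply Hz. rewrite Rabs_left in Hdx by lra.
  assert (Rmin d 1 <= d) by apply Rmin_l. lra.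
Qed.

Lemma lim1_elim (f : R -> R) (l : R) : lim1 f l ->
  forall eps, 0 < eps -> exists d, 0 < d /\
    forall z, 1 - d < z < 1 -> Rabs (f z - l) < eps.
Proof.
  intros Hf eps Heps. destruct (Hf eps Heps) as [d [Hd Hz]].
  exists (Rmin d 1). split; [apply Rmin_glb_lt; lra|].
  intros z Hz1. assert (Rmin d 1 <= d) by apply Rmin_l. assert (Rmin d 1 <= 1) by apply Rmin_r.
  apply (Hz z). split; [unfold unit_interval; lra|].
  simpl. unfold Rdist. rewrite Rabs_left by lra. lra.
Qed.

Lemma lim1_const (c : R) : lim1 (fun _ => c) c.
Proof. exact (limit_free (fun _ => c) unit_interval 0 1). Qed.

Lemma lim1_plus (f g : R -> R) (l l' : R) :
  lim1 f l -> lim1 g l' -> lim1 (fun z => f z + g z) (l + l').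
Proof. apply limit_plus. Qed.

Lemma lim1_mult (f g : R -> R) (l l' : R) :
  lim1 f l -> lim1 g l' -> lim1 (fun z => f z * g z) (l * l').
Proof. apply limit_mul. Qed.

Lemma lim1_sum (f : nat -> R -> R) (l : nat -> R) (n : nat) :
  (forall i, (i <= n)%nat -> lim1 (f i) (l i)) ->
  lim1 (fun z => sum_f_R0 (fun i => f i z) n) (sum_f_R0 l n).
Proof.
  induction n; intros Hf.
  - apply Hf. lia.
  - apply lim1_plus; [apply IHn; intros; apply Hf|apply Hf]; lia.
Qed.

Lemma lim1_continuous (f : R -> R) : continuity_pt f 1 -> lim1 f (f 1).
Proof.
  intros Hc eps Heps. destruct (Hc eps Heps) as [d [Hd Hz]].
  exists d; split; auto. intros x [Hx Hdx]. apply Hz. split; auto.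
  split; [exact I|]. unfold unit_interval in Hx. lra.
Qed.

Lemma lim1_squeeze0 (f g : R -> R) (d0 : R) : 0 < d0 ->
  (forall z, 1 - d0 < z < 1 -> Rabs (f z) <= g z) -> lim1 g 0 -> lim1 f 0.
Proof.
  intros Hd0 Hfg Hg. apply lim1_intro. intros eps Heps.
  destruct (lim1_elim g 0 Hg eps Heps) as [d [Hd Hz]].
  exists (Rmin d d0). split; [apply Rmin_glb_lt; lra|].
  intros z Hz1. assert (Rmin d d0 <= d) by apply Rmin_l. assert (Rmin d d0 <= d0) by apply Rmin_r.
  specialize (Hz z ltac:(lra)). rewrite Rminus_0_r in *.
  apply Rle_lt_trans with (g z); [apply Hfg; lra|].
  apply Rle_lt_trans with (2 := Hz), RRle_abs.
Qed.

Lemma lim1_of_const (f : R -> R) (c l : R) :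
  (forall z, 0 < z < 1 -> f z = c) -> lim1 f l -> c = l.
Proof.
  intros Hc Hf. apply Rminus_diag_uniq.
  destruct (Req_dec (c - l) 0) as [E0|Hne]; [exact E0|exfalso].
  assert (Hp : 0 < Rabs (c - l)) by (apply Rabs_pos_lt; exact Hne).
  destruct (lim1_elim f l Hf _ Hp) as [d [Hd Hz]].
  set (z := Rmax (1/2) (1 - d/2)).
  assert (Hz1 : 1/2 <= z < 1) by (split; [apply Rmax_l|apply Rmax_lub_lt; lra]).
  assert (Hz2 : 1 - d < z) by (apply Rlt_le_trans with (1 - d/2); [lra|apply Rmax_r]).
  specialize (Hz z (conj Hz2 (proj2 Hz1))). rewrite Hc in Hz by lra. lra.
Qed.

(** * Abel's theorem for Li_{m,{1}_k} at 1 *)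

Lemma bernoulli_ineq (z : R) (n : nat) : 0 <= z <= 1 -> 1 - z ^ n <= INR n * (1 - z).
Proof.
  intros Hz. induction n; [simpl; lra|].
  rewrite S_INR. simpl pow.
  assert (0 <= z ^ n <= 1) by (split; [apply pow_le; lra|rewrite <- (pow1 n); apply pow_incr; lra]).
  nra.
Qed.

Lemma Li_lower_bound (m k M : nat) (z : R) : 0 <= z < 1 ->
  sum_f_R0 (li_coef m k) M
    - (1 - z) * sum_f_R0 (fun N => INR (S N) * li_coef m k N) M
  <= Li (m :: ones k) z.
Proof.
  intros Hz.
  apply Rle_trans with (pser1 (li_coef m k) z M).
  - unfold pser1. rewrite scal_sum, <- minus_sum. apply sum_Rle. intros N _.
    assert (Hb := bernoulli_ineq z (S N) ltac:(lra)).
    assert (Hc := li_coef_nonneg m k N). nra.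
  - apply sum_incr; [apply Li_pser1_cv; rewrite Rabs_right; lra|].
    intro N. apply Rmult_le_pos; [apply pow_le; lra|apply li_coef_nonneg].
Qed.

Theorem Li_lim1 (m k : nat) : (2 <= m)%nat -> lim1 (Li (m :: ones k)) (zeta (m :: ones k)).
Proof.
  intros Hm. apply lim1_intro. intros eps Heps.
  set (Z := zeta (m :: ones k)).
  assert (HZ0 : 0 <= Z) by (apply zeta_nonneg, Hm).
  destruct (zeta_series_cv m k Hm (eps / 2) ltac:(lra)) as [M HM].
  specialize (HM M (Nat.le_refl M)). unfold Rdist in HM. fold Z in HM.
  assert (HSM : sum_f_R0 (li_coef m k) M <= Z)
    by (apply sum_incr; [apply zeta_series_cv, Hm|apply li_coef_nonneg]).
  rewrite Rabs_left1 in HM by lra.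
  set (CM := sum_f_R0 (fun N => INR (S N) * li_coef m k N) M).
  assert (HCM : 0 <= CM)
    by (apply cond_pos_sum; intro N; apply Rmult_le_pos; [apply pos_INR|apply li_coef_nonneg]).
  set (d := Rmin (1/2) (eps / (2 * (CM + 1)))).
  assert (Hd1 : d <= 1/2) by apply Rmin_l.
  assert (Hd2 : d <= eps / (2 * (CM + 1))) by apply Rmin_r.
  exists d. split; [apply Rmin_glb_lt; [lra|apply Rdiv_lt_0_compat; lra]|].
  intros z Hz.
  destruct (Li_bounds m k z Hm ltac:(lra)) as [_ Hup]. fold Z in Hup.
  assert (Hlow := Li_lower_bound m k M z ltac:(lra)). fold CM in Hlow.
  assert (Hsmall : (1 - z) * CM <= eps / 2).
  { apply Rle_trans with (eps / (2 * (CM + 1)) * CM); [apply Rmult_le_compat_r; lra|].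
    apply (Rmult_le_reg_r (2 * (CM + 1))); [lra|]. field_simplify; lra. }
  assert (z * Z <= Z) by nra.
  rewrite Rabs_left1; lra.
Qed.

Lemma exp_INR_mult (n : nat) (x : R) : exp (INR n * x) = exp x ^ n.
Proof. rewrite <- Rpower_pow by apply exp_pos. unfold Rpower. rewrite ln_exp. reflexivity. Qed.

Lemma xlog_bound (p : nat) (u : R) : 0 < u < 1 ->
  u * (- ln u) ^ p <= INR (S p) ^ (S p) / (- ln u).
Proof.
  intros Hu.
  set (t := - ln u).
  assert (Ht : 0 < t) by (unfold t; assert (ln u < ln 1) by (apply ln_increasing; lra); rewrite ln_1 in *; lra).
  assert (Hq := INR_S_pos p).
  set (a := t / INR (S p)).
  assert (Ha : 0 <= a) by (unfold a; apply Rlt_le, Rdiv_lt_0_compat; lra).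
  assert (Hexp : exp t = / u).
  { unfold t. rewrite <- ln_Rinv by lra. apply exp_ln, Rinv_0_lt_compat; lra. }
  assert (Ha2 : a ^ S p <= / u).
  { rewrite <- Hexp. replace t with (INR (S p) * a) by (unfold a; field; lra).
    rewrite exp_INR_mult. apply pow_incr. assert (H1 := exp_ineq1_le a). lra. }
  assert (Htp : t ^ S p = INR (S p) ^ S p * a ^ S p).
  { rewrite <- Rpow_mult_distr. f_equal. unfold a. field. lra. }
  apply (Rmult_le_reg_r t); [exact Ht|].
  replace (INR (S p) ^ S p / t * t) with (INR (S p) ^ S p) by (field; lra).
  replace (u * t ^ p * t) with (u * t ^ S p) by (simpl; ring).
  rewrite Htp.
  assert (0 < INR (S p) ^ S p) by (apply pow_lt; lra).
  apply Rle_trans with (u * (INR (S p) ^ S p * / u)).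
  - apply Rmult_le_compat_l; [lra|]. apply Rmult_le_compat_l; lra.
  - right. field. lra.
Qed.

Lemma xlog_lim1 (p : nat) : lim1 (fun z => (1 - z) * (- ln (1 - z)) ^ p) 0.
Proof.
  apply lim1_intro. intros eps Heps.
  set (C := INR (S p) ^ S p).
  assert (HC : 0 < C) by (apply pow_lt, INR_S_pos).
  assert (HCe : 0 < C / eps) by (apply Rdiv_lt_0_compat; lra).
  exists (exp (- (C / eps))). split; [apply exp_pos|].
  intros z Hz. set (u := 1 - z).
  assert (Hd1 : exp (- (C / eps)) < 1) by (rewrite <- exp_0; apply exp_increasing; lra).
  assert (Hu : 0 < u < exp (- (C / eps))) by (unfold u; lra).
  assert (Hlu : ln u < - (C / eps)) by (rewrite <- (ln_exp (- (C / eps))); apply ln_increasing; lra).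
  assert (Hb := xlog_bound p u ltac:(lra)). fold C in Hb.
  assert (H0 : 0 <= u * (- ln u) ^ p) by (apply Rmult_le_pos; [lra|apply pow_le; lra]).
  rewrite Rminus_0_r, Rabs_right by lra.
  apply Rle_lt_trans with (1 := Hb).
  apply (Rmult_lt_reg_r (- ln u)); [lra|].
  replace (C / - ln u * - ln u) with C by (field; lra).
  apply (Rmult_lt_reg_l (/ eps)); [apply Rinv_0_lt_compat; lra|].
  replace (/ eps * (eps * - ln u)) with (- ln u) by (field; lra).
  unfold Rdiv in Hlu. lra.
Qed.

Lemma P_lim1 (p : nat) : lim1 (P p) (P p 1).
Proof.
  apply lim1_continuous, derivable_continuous_pt. destruct p as [|p].
  - exists 0. apply (derivable_pt_lim_ext (fct_cte 1)); [intro; unfold fct_cte; rewrite P_0; reflexivity|].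
    apply derivable_pt_lim_const.
  - exists (- P p 1 / 1). apply P_deriv. lra.
Qed.

Lemma mln_bound (z : R) : 1/2 <= z <= 1 -> - ln z <= 2 * (1 - z).
Proof.
  intros Hz.
  assert (H1 := exp_ineq1_le (ln (/ z))).
  rewrite exp_ln in H1 by (apply Rinv_0_lt_compat; lra).
  rewrite ln_Rinv in H1 by lra.
  assert (/ z <= 1 + 2 * (1 - z)).
  { apply (Rmult_le_reg_r z); [lra|]. rewrite Rinv_l by lra. nra. }
  lra.
Qed.

Lemma Li_deriv_div (m k : nat) (x : R) : 0 < x < 1 ->
  derivable_pt_lim (Li (S m :: ones k)) x (Li (m :: ones k) x / x).
Proof.
  intros Hx. assert (Hx' : Rabs x < 1) by (rewrite Rabs_right; lra).
  replace (Li (m :: ones k) x / x) with (Li_quot m k x)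
    by (rewrite Li_quot_mul by exact Hx'; field; lra).
  apply Li_deriv, Hx'.
Qed.

Lemma telescope (u : nat -> R) (M : nat) :
  sum_f_R0 (fun p => u p - match p with O => 0 | S q => u q end) M = u M.
Proof. induction M; simpl; [ring|]. rewrite IHM. ring. Qed.

Lemma weighted_Li_deriv (M k p : nat) (x : R) : (p <= M)%nat -> 0 < x < 1 ->
  let T q := P q x * Li ((M + 1 - q)%nat :: ones k) x in
  derivable_pt_lim (fun z => P p z * Li ((M + 2 - p)%nat :: ones k) z) x
    ((T p - match p with O => 0 | S q => T q end) / x).
Proof.
  intros Hp Hx T.
  replace (M + 2 - p)%nat with (S (M + 1 - p)) by lia.
  destruct p as [|q].
  - replace ((T 0%nat - 0) / x) with (0 * Li (S (M + 1 - 0) :: ones k) x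
                                  + P 0 x * (Li ((M + 1 - 0)%nat :: ones k) x / x))
      by (unfold T; field; lra).
    apply (derivable_pt_lim_mult (P 0)); [|apply Li_deriv_div, Hx].
    apply (derivable_pt_lim_ext (fct_cte 1)); [intro; unfold fct_cte; rewrite P_0; reflexivity|].
    apply derivable_pt_lim_const.
  - replace ((T (S q) - T q) / x) with (- P q x / x * Li (S (M + 1 - S q) :: ones k) x
                                  + P (S q) x * (Li ((M + 1 - S q)%nat :: ones k) x / x)).
    + apply derivable_pt_lim_mult; [apply P_deriv; lra|apply Li_deriv_div, Hx].
    + unfold T. replace (S (M + 1 - S q)) with (M + 1 - q)%nat by lia. field. lra.
Qed.

(* The inner sums telescope:
   d/dx sum_(p<=M) P_p(x) Li_{M+2-p,{1}_k}(x) = P_M(x) Q_(k+1)(x) / x. *)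
Lemma inner_sum_deriv (M k : nat) (x : R) : 0 < x < 1 ->
  derivable_pt_lim (fun z => sum_f_R0 (fun p => P p z * Li ((M + 2 - p)%nat :: ones k) z) M) x
    (P M x * Q (S k) x / x).
Proof.
  intros Hx.
  set (T := fun q => P q x * Li ((M + 1 - q)%nat :: ones k) x).
  replace (P M x * Q (S k) x / x)
    with (sum_f_R0 (fun p => (T p - match p with O => 0 | S q => T q end) / x) M).
  - apply (derivable_pt_lim_sum (fun p z => P p z * Li ((M + 2 - p)%nat :: ones k) z)).
    intros p Hp. apply weighted_Li_deriv; assumption.
  - unfold Rdiv. rewrite <- scal_sum, telescope, Rmult_comm. unfold T. replace (M + 1 - M)%nat with 1%nat by lia.
    rewrite (Li_ones_closed (S k)) by (rewrite Rabs_right; lra). reflexivity.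
Qed.

(** * The auxiliary function Phi *)

(* L_n(z) = sum_(k<=n) sum_(p<=n-k) P_p(z) Li_{n-k+2-p,{1}_k}(z);
   the left-hand side of the theorem is L_n(1/2). *)
Definition Lfun (n : nat) (z : R) : R :=
  sum_f_R0 (fun k =>
    sum_f_R0 (fun p => P p z * Li ((n - k + 2 - p)%nat :: ones k) z) (n - k)) n.

Definition Rfun (n : nat) (z : R) : R :=
  sum_f_R0 (fun i => P (S i) z * Q (n + 1 - i) z) n.

(* Phi_n(z) = L_n(z) + L_n(1-z) + R_n(z) is constant on (0,1). *)
Definition Phi (n : nat) (z : R) : R := Lfun n z + Lfun n (1 - z) + Rfun n z.

Lemma Lfun_deriv (n : nat) (x : R) : 0 < x < 1 ->
  derivable_pt_lim (Lfun n) x (sum_f_R0 (fun k => P (n - k) x * Q (S k) x / x) n).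
Proof.
  intros Hx. apply derivable_pt_lim_sum. intros k Hk.
  apply inner_sum_deriv, Hx.
Qed.

Lemma Rfun_deriv (n : nat) (x : R) : 0 < x < 1 ->
  derivable_pt_lim (Rfun n) x
    (sum_f_R0 (fun i => - P i x / x * Q (S (n - i)) x + P (S i) x * (Q (n - i) x / (1 - x))) n).
Proof.
  intros Hx. apply derivable_pt_lim_sum. intros i Hi.
  replace (n + 1 - i)%nat with (S (n - i)) by lia.
  apply derivable_pt_lim_mult; [apply P_deriv|apply Q_deriv]; lra.
Qed.

Lemma sum_rev (f : nat -> R) (n : nat) :
  sum_f_R0 f n = sum_f_R0 (fun i => f (n - i)%nat) n.
Proof.
  revert f. induction n; intros f; [reflexivity|].
  rewrite (tech5 (fun i => f (S n - i)%nat)), Nat.sub_diag.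
  rewrite (decomp_sum f (S n)) by lia. simpl pred.
  rewrite (IHn (fun j => f (S j))), Rplus_comm. f_equal.
  apply sum_eq. intros i Hi. f_equal. lia.
Qed.

Lemma Q_reflect (j : nat) (x : R) : Q j (1 - x) = P j x.
Proof. unfold Q. f_equal. ring. Qed.

(* The three derivatives cancel, by the reflection P_j(1-x) = Q_j(x). *)
Lemma Phi_deriv (n : nat) (x : R) : 0 < x < 1 -> derivable_pt_lim (Phi n) x 0.
Proof.
  intros Hx.
  set (D1 := sum_f_R0 (fun k => P (n - k) x * Q (S k) x / x) n).
  set (D2 := sum_f_R0 (fun k => P (n - k) (1 - x) * Q (S k) (1 - x) / (1 - x)) n).
  set (D3 := sum_f_R0 (fun i => - P i x / x * Q (S (n - i)) x + P (S i) x * (Q (n - i) x / (1 - x))) n).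
  assert (Hcancel : D1 + D2 * (-1) + D3 = 0).
  { unfold D1, D2, D3.
    rewrite (sum_rev (fun k => P (n - k) x * Q (S k) x / x)), Rmult_comm, scal_sum, <- !plus_sum.
    apply sum_eq_R0. intros i Hi. fold (Q (n - i) x). rewrite Q_reflect.
    replace (n - (n - i))%nat with i by lia. field. lra. }
  rewrite <- Hcancel.
  apply (derivable_pt_lim_plus (fun z => Lfun n z + Lfun n (1 - z)) (Rfun n));
    [apply (derivable_pt_lim_plus (Lfun n) (fun z => Lfun n (1 - z)))|apply Rfun_deriv, Hx].
  - apply Lfun_deriv, Hx.
  - apply (derivable_pt_lim_comp (fun z => 1 - z) (Lfun n)); [apply one_minus_deriv|].
    apply Lfun_deriv. lra.
Qed.

Lemma sum_P_at_1 (g : nat -> R) (M : nat) : sum_f_R0 (fun p => P p 1 * g p) M = g 0%nat.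
Proof.
  induction M; simpl sum_f_R0; [rewrite P_0; ring|].
  rewrite IHM, P_S_at_1. ring.
Qed.

(* L_n(z) -> sum_(k<=n) zeta(n-k+2,{1}_k): only the p = 0 terms survive. *)
Lemma Lfun_lim1 (n : nat) :
  lim1 (Lfun n) (sum_f_R0 (fun k => zeta ((n - k + 2)%nat :: ones k)) n).
Proof.
  apply lim1_sum. intros k Hk.
  replace (zeta ((n - k + 2)%nat :: ones k))
    with (sum_f_R0 (fun p => P p 1 * zeta ((n - k + 2 - p)%nat :: ones k)) (n - k))
    by (rewrite sum_P_at_1, Nat.sub_0_r; reflexivity).
  apply lim1_sum. intros p Hp.
  apply lim1_mult; [apply P_lim1|apply Li_lim1; lia].
Qed.

Lemma P_le_pow (j : nat) (z : R) : 0 < z <= 1 -> P j z <= (- ln z) ^ j.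
Proof.
  intros Hz. unfold P, Rdiv.
  assert (Hpos : 0 <= (- ln z) ^ j) by (apply pow_le, mln_nonneg, Hz).
  assert (Hf : 1 <= INR (fact j)) by (apply (le_INR 1), lt_O_fact).
  rewrite <- (Rmult_1_r ((- ln z) ^ j)) at 2.
  apply Rmult_le_compat_l; [exact Hpos|].
  rewrite <- Rinv_1. apply Rinv_le_contravar; lra.
Qed.

(* Each term of L_n(1-z) is O((1-z) (-ln(1-z))^p), hence L_n(1-z) -> 0. *)
Lemma Lfun_reflect_lim1 (n : nat) : lim1 (fun z => Lfun n (1 - z)) 0.
Proof.
  rewrite <- (sum_eq_R0 (fun _ => 0) n) by reflexivity.
  apply (lim1_sum (fun k z => sum_f_R0 (fun p => P p (1 - z) * Li ((n - k + 2 - p)%nat :: ones k) (1 - z)) (n - k))).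
  intros k Hk.
  rewrite <- (sum_eq_R0 (fun _ => 0) (n - k)) by reflexivity.
  apply (lim1_sum (fun p z => P p (1 - z) * Li ((n - k + 2 - p)%nat :: ones k) (1 - z))).
  intros p Hp.
  set (m := (n - k + 2 - p)%nat). assert (Hm : (2 <= m)%nat) by (unfold m; lia).
  set (Z := zeta (m :: ones k)).
  apply (lim1_squeeze0 _ (fun z => Z * ((1 - z) * (- ln (1 - z)) ^ p)) 1); [lra| |].
  - intros z Hz.
    destruct (Li_bounds m k (1 - z) Hm ltac:(lra)) as [HL0 HL1]. fold Z in HL1.
    assert (HP0 := P_nonneg p (1 - z) ltac:(lra)).
    assert (HPb := P_le_pow p (1 - z) ltac:(lra)).
    assert (HZ := zeta_nonneg m k Hm). fold Z in HZ.
    rewrite Rabs_right by (apply Rle_ge, Rmult_le_pos; assumption).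
    apply Rle_trans with (P p (1 - z) * ((1 - z) * Z)); [apply Rmult_le_compat_l; assumption|].
    replace (Z * ((1 - z) * (- ln (1 - z)) ^ p)) with ((1 - z) * Z * (- ln (1 - z)) ^ p) by ring.
    rewrite Rmult_comm. apply Rmult_le_compat_l; [apply Rmult_le_pos; lra|exact HPb].
  - rewrite <- (Rmult_0_r Z). apply lim1_mult; [apply lim1_const|apply xlog_lim1].
Qed.

Lemma P_S_le_lin (i : nat) (z : R) : 1/2 <= z <= 1 -> P (S i) z <= 2 ^ S i * (1 - z).
Proof.
  intros Hz. apply Rle_trans with ((- ln z) ^ S i); [apply P_le_pow; lra|].
  assert (Hl := mln_bound z Hz).
  assert (Hl0 := mln_nonneg z ltac:(lra)).
  apply Rle_trans with ((2 * (1 - z)) ^ S i); [apply pow_incr; lra|].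
  rewrite Rpow_mult_distr. apply Rmult_le_compat_l; [apply pow_le; lra|].
  simpl pow. apply Rle_trans with ((1 - z) * 1); [|lra].
  apply Rmult_le_compat_l; [lra|]. apply Rle_trans with (1 ^ i); [apply pow_incr; lra|rewrite pow1; lra].
Qed.

(* Each term of R_n(z) is O((1-z) (-ln(1-z))^j), hence R_n(z) -> 0. *)
Lemma Rfun_lim1 (n : nat) : lim1 (Rfun n) 0.
Proof.
  rewrite <- (sum_eq_R0 (fun _ => 0) n) by reflexivity.
  apply (lim1_sum (fun i z => P (S i) z * Q (n + 1 - i) z)). intros i Hi.
  set (j := (n + 1 - i)%nat).
  apply (lim1_squeeze0 _ (fun z => 2 ^ S i * ((1 - z) * (- ln (1 - z)) ^ j)) (1/2)); [lra| |].
  - intros z Hz.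
    assert (HP0 := P_nonneg (S i) z ltac:(lra)).
    assert (HQ0 := P_nonneg j (1 - z) ltac:(lra)). fold (Q j z) in HQ0.
    assert (HPb := P_S_le_lin i z ltac:(lra)).
    assert (HQb := P_le_pow j (1 - z) ltac:(lra)). fold (Q j z) in HQb.
    rewrite Rabs_right by (apply Rle_ge, Rmult_le_pos; assumption).
    rewrite <- Rmult_assoc. apply Rmult_le_compat; assumption.
  - rewrite <- (Rmult_0_r (2 ^ S i)). apply lim1_mult; [apply lim1_const|apply xlog_lim1].
Qed.

Lemma Phi_lim1 (n : nat) :
  lim1 (Phi n) (sum_f_R0 (fun k => zeta ((n - k + 2)%nat :: ones k)) n).
Proof.
  rewrite <- (Rplus_0_r (sum_f_R0 _ n)), <- (Rplus_0_r (sum_f_R0 _ n + 0)).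
  apply (lim1_plus (fun z => Lfun n z + Lfun n (1 - z)) (Rfun n)); [|apply Rfun_lim1].
  apply lim1_plus; [apply Lfun_lim1|apply Lfun_reflect_lim1].
Qed.

Lemma P_half (p : nat) : P p (1/2) = ln 2 ^ p / INR (fact p).
Proof. unfold P. replace (1/2) with (/ 2) by field. rewrite ln_Rinv by lra. do 2 f_equal. ring. Qed.

(* sum_(i<=n) 1 / ((i+1)! (n+1-i)!) = (2^(n+2) - 2) / (n+2)!, from the
   binomial expansion of (1+1)^(n+2) without its two extreme terms. *)
Lemma binomial_inner_sum (n : nat) :
  sum_f_R0 (fun i => / (INR (fact (S i)) * INR (fact (n + 1 - i)))) n =
  (2 ^ (n + 2) - 2) / INR (fact (n + 2)).
Proof.
  assert (Hb := binomial 1 1 (n + 2)).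
  replace (1 + 1) with 2 in Hb by ring.
  replace (n + 2)%nat with (S (S n)) in * by lia.
  rewrite tech5, decomp_sum in Hb by lia. simpl pred in Hb.
  assert (Hf : 0 < INR (fact (S (S n)))) by (apply lt_0_INR, lt_O_fact).
  assert (HC0 : C (S (S n)) 0 = 1)
    by (unfold C; rewrite Nat.sub_0_r; change (INR (fact 0)) with 1; field; apply INR_fact_neq_0).
  assert (HCn : C (S (S n)) (S (S n)) = 1)
    by (unfold C; rewrite Nat.sub_diag; change (INR (fact 0)) with 1; field; apply INR_fact_neq_0).
  rewrite HC0, HCn, !pow1 in Hb.
  rewrite (sum_eq _ (fun i => / (INR (fact (S i)) * INR (fact (n + 1 - i))) * INR (fact (S (S n)))))
    in Hb.
  2:{ intros i Hi. rewrite !pow1. unfold C.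
      replace (S (S n) - S i)%nat with (n + 1 - i)%nat by lia. field.
      split; apply INR_fact_neq_0. }
  rewrite <- scal_sum in Hb.
  apply (Rmult_eq_reg_l (INR (fact (S (S n))))); [|lra].
  field_simplify; lra.
Qed.

Lemma Rfun_half (n : nat) :
  Rfun n (1/2) = ln 2 ^ (n + 2) * ((2 ^ (n + 2) - 2) / INR (fact (n + 2))).
Proof.
  unfold Rfun. rewrite <- binomial_inner_sum, scal_sum. apply sum_eq. intros i Hi.
  unfold Q. replace (1 - 1/2) with (1/2) by field. rewrite !P_half.
  replace (n + 2)%nat with (S i + (n + 1 - i))%nat by lia. rewrite pow_add.
  field. split; apply INR_fact_neq_0.
Qed.

Theorem corollary7 (n : nat) :
  sum_f_R0 (fun k =>
    sum_f_R0 (fun p =>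
      ln 2 ^ p / INR (fact p) * Li ((n - k + 2 - p)%nat :: ones k) (1/2))
      (n - k)) n
  = (1 - 2 ^ (n + 1)) / INR (fact (n + 2)) * ln 2 ^ (n + 2)
    + 1/2 * sum_f_R0 (fun k => zeta ((n - k + 2)%nat :: ones k)) n.
Proof.
  (* Phi_n is constant on (0,1), so its value at 1/2 is its limit at 1. *)
  assert (Hconst : forall z, 0 < z < 1 -> Phi n z = Phi n (1/2))
    by (intros z Hz; apply (const_of_deriv0 (Phi n) 0 1); [apply Phi_deriv|exact Hz|lra]).
  assert (Hval := lim1_of_const _ _ _ Hconst (Phi_lim1 n)).
  (* At 1/2 the two L-terms coincide with the left-hand side. *)
  assert (HL : Lfun n (1/2) = sum_f_R0 (fun k =>
    sum_f_R0 (fun p => ln 2 ^ p / INR (fact p) * Li ((n - k + 2 - p)%nat :: ones k) (1/2))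
      (n - k)) n)
    by (apply sum_eq; intros k Hk; apply sum_eq; intros p Hp; rewrite P_half; reflexivity).
  unfold Phi in Hval. replace (1 - 1/2) with (1/2) in Hval by field.
  rewrite Rfun_half, HL in Hval.
  replace (2 ^ (n + 2)) with (2 * 2 ^ (n + 1)) in Hval
    by (replace (n + 2)%nat with (S (n + 1)) by lia; reflexivity).
  assert (Hf := INR_fact_neq_0 (n + 2)).
  apply (Rmult_eq_reg_l 2); [|lra].
  rewrite <- Hval. field. exact Hf.
Qed.
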